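(* For every $n\ge 0$, a permutation $\pi$ of $\{1,\ldots,n\}$ can be produced as the output of a loosely locked jump queue with input $1,2,\ldots,n$ if and only if $\pi$ avoids the pattern $4231$.
   Context: A permutation $\pi=\pi_1\cdots\pi_n$ contains a pattern $\alpha=\alpha_1\cdots\alpha_k$ (a permutation of $\{1,\ldots,k\}$) if there are indices $i_1<\cdots<i_k$ with $\pi_{i_r}<\pi_{i_s}$ iff $\alpha_r<\alpha_s$; otherwise $\pi$ avoids $\alpha$. Jump queues. The input is $1,2,\ldots,n$, and at each step one may either append the next input element to the rear of the queue, or remove (output) some element of the queue; the sequence of outputs forms a permutation of $1,\ldots,n$ once all elements have been output. The front element of the queue may always be output. Outputting an element other than the front element is called a jump, and an element may jump only if it is not locked. When an element $x$ jumps, every element currently in the queue behind $x$ (closer to the rear) becomes locked; this lock is released at the moment when all elements that were in front of $x$ at the time of the jump have been output. An element is locked as long as at least one lock applying to it is in force. (In particular jumping the rear element locks nothing.) - In a loosely locked jump queue, newly appended elements are initially unlocked. *)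

From mathcomp Require Import all_boot.
Set Implicit Arguments. Unset Strict Implicit. Unset Printing Implicit Defensive.

Definition order_iso (s alpha : seq nat) : bool :=
  (size s == size alpha) &&
  [forall r : 'I_(size alpha), forall t : 'I_(size alpha),
     (nth 0 s r < nth 0 s t) == (nth 0 alpha r < nth 0 alpha t)].

Definition contains (pi alpha : seq nat) : Prop :=
  exists s : seq nat, subseq s pi /\ order_iso s alpha.

Definition avoids (pi alpha : seq nat) : Prop := ~ contains pi alpha.

(* State: number of input elements already appended (next input is i.+1),
   queue contents (front first), list of locks, output so far.
   A lock is a pair (F, L): F = elements that were in front of the jumping
   element at jump time, L = elements that were behind it (and got locked). Newly appended elements are in no L: loose locking. *)
Record jq_state := JQ {
  jq_in : nat;
  jq_queue : seq nat;
  jq_locks : seq (seq nat * seq nat);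
  jq_out : seq nat }.

Definition lock_active (q : seq nat) (l : seq nat * seq nat) : bool :=
  has (fun y => y \in q) l.1.

Definition is_locked (q : seq nat) (locks : seq (seq nat * seq nat)) (x : nat) : bool :=
  has (fun l => lock_active q l && (x \in l.2)) locks.

Inductive jq_step (n : nat) : jq_state -> jq_state -> Prop :=
| jq_push i q L o :
    i < n -> jq_step n (JQ i q L o) (JQ i.+1 (rcons q i.+1) L o)
| jq_pop_front i x q L o :
    jq_step n (JQ i (x :: q) L o) (JQ i q L (rcons o x))
| jq_jump i a x b L o :
    a != [::] -> ~~ is_locked (a ++ x :: b) L x ->
    jq_step n (JQ i (a ++ x :: b) L o) (JQ i (a ++ b) ((a, b) :: L) (rcons o x)).

Inductive jq_reach (n : nat) : jq_state -> jq_state -> Prop :=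
| jq_refl s : jq_reach n s s
| jq_trans s1 s2 s3 : jq_step n s1 s2 -> jq_reach n s2 s3 -> jq_reach n s1 s3.

Definition jq_producible (n : nat) (pi : seq nat) : Prop :=
  exists L, jq_reach n (JQ 0 [::] [::] [::]) (JQ n [::] L pi).

From mathcomp Require Import all_boot zify.
Set Implicit Arguments. Unset Strict Implicit. Unset Printing Implicit Defensive.

(* The queue is always increasing, so an element x can leave before a smaller
   y only by jumping over it, and that jump locks every larger t already
   behind x until y leaves.  In a 4231 occurrence w x t y, the element t was
   appended before w left, hence before x left; so t stays locked until y
   leaves, yet t has to leave first.
   Conversely, a 4231-avoiding pi is output greedily: append inputs up to the
   next value, then pop it or jump it.  When x jumps over F with a nonempty
   part B behind it, the largest value w output so far exceeds B, so the lock
   (F, B) comes with w, x output in this order and y < x < t < w for y in F,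
   t in B.  If a later value z were locked by it through a pending y, then
   w x z y would be a 4231 occurrence in pi. *)

Lemma subseq_rcons_cases (T : eqType) (s o : seq T) a z :
  subseq (rcons s a) (rcons o z) -> subseq (rcons s a) o \/ (a = z /\ subseq s o).
Proof.
rewrite -subseq_rev !rev_rcons /=; case: eqP => [->|_] Hs.
  by right; rewrite -subseq_rev.
by left; rewrite -subseq_rev rev_rcons.
Qed.

Lemma sorted_ltn_mem_split (a b : seq nat) x y :
  sorted ltn (a ++ x :: b) -> y \in a ++ x :: b ->
  (y \in a) = (y < x) /\ (y \in b) = (x < y).
Proof.
rewrite sorted_pairwise; last exact: ltn_trans.
rewrite pairwise_cat /= => /and3P [/allrelP Ha _ /andP [/allP Hb _]].
have {}Ha u : u \in a -> u < x by move/Ha; apply; apply: mem_head.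
have {}Hb u : u \in b -> x < u by move/Hb.
rewrite mem_cat in_cons => yab.
split; apply/idP/idP.
- exact: Ha.
- by case/or3P: yab => [// | /eqP | /Hb] => *; exfalso; lia.
- exact: Hb.
- by case/or3P: yab => [/Ha | /eqP | //] => *; exfalso; lia.
Qed.

Lemma order_iso_4231 w x t y :
  order_iso [:: w; x; t; y] [:: 4; 2; 3; 1] = [&& y < x, x < t & t < w].
Proof.
apply/idP/idP => [/andP [_ /forallP H] | /and3P [yx xt tw]].
  have iso r s := forallP (H r) s.
  move: (iso (inord 3) (inord 1)) (iso (inord 1) (inord 2)) (iso (inord 2) (inord 0)).
  by rewrite /= !inordK //= => /eqP -> /eqP -> /eqP ->.
apply/forallP => -[[|[|[|[|r]]]] Hr] //; apply/forallP => -[[|[|[|[|s]]]] Hs] //=;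
  apply/eqP; lia.
Qed.

Lemma order_iso_size s alpha : order_iso s alpha -> size s = size alpha.
Proof. by case/andP => /eqP. Qed.

Definition lock_pair (L : seq (seq nat * seq nat)) y v : bool :=
  has (fun l => (y \in l.1) && (v \in l.2)) L.

Lemma is_lockedP q L x :
  reflect (exists2 y, y \in q & lock_pair L y x) (is_locked q L x).
Proof.
apply: (iffP hasP) => [[l lL /andP [/hasP [y yl yq] xl]] | [y yq /hasP [l lL /andP [yl xl]]]].
  by exists y => //; apply/hasP; exists l; rewrite ?yl.
by exists l; rewrite // xl andbT; apply/hasP; exists y.
Qed.

Lemma jq_reach_trans n s1 s2 s3 :
  jq_reach n s1 s2 -> jq_reach n s2 s3 -> jq_reach n s1 s3.
Proof. by elim=> [//|a b c Hab _ IH] /IH; apply: jq_trans. Qed.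

Lemma jq_step_reach n s1 s2 : jq_step n s1 s2 -> jq_reach n s1 s2.
Proof. by move=> H; apply: jq_trans H (jq_refl _ _). Qed.

Lemma jq_reach_push n L o k i q : i + k <= n ->
  jq_reach n (JQ i q L o) (JQ (i + k) (q ++ iota i.+1 k) L o).
Proof.
elim: k i q => [|k IH] i q ikn; first by rewrite addn0 cats0; apply: jq_refl.
apply: (@jq_trans n _ (JQ i.+1 (rcons q i.+1) L o)); first by apply: jq_push; lia.
by rewrite addnS -addSn -cat_rcons; apply: IH; lia.
Qed.

Definition jq_wf (s : jq_state) : Prop :=
  let: JQ i q _ o := s in
  [/\ sorted ltn q, uniq (o ++ q) & forall v, (v \in o ++ q) = (0 < v <= i)].

Lemma jq_wf_mem i q L o v :
  jq_wf (JQ i q L o) -> v \notin o -> 0 < v -> v <= i -> v \in q.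
Proof. by case=> _ _ M vo v0 vi; move: (M v); rewrite mem_cat (negbTE vo) v0 vi. Qed.

Lemma jq_wf_out i q L o v : jq_wf (JQ i q L o) -> v \in q -> v \notin o.
Proof.
case=> _ + _ vq; rewrite cat_uniq => /and3P [_ + _]; apply: contra => vo.
by apply/hasP; exists v.
Qed.

Lemma jq_wf_le i q L o v : jq_wf (JQ i q L o) -> v \in o ++ q -> v <= i.
Proof. by case=> _ _ ->; case/andP. Qed.

Lemma jq_wf_step n s s' : jq_step n s s' -> jq_wf s -> jq_wf s'.
Proof.
case=> {s s'} [i q L o _ | i x q L o | i a x b L o _ _] [S U M].
- have qi u : u \in q -> u <= i by move=> uq; move: (M u); rewrite mem_cat uq orbT; lia.
  split.
  + rewrite -cats1 sorted_pairwise; last exact: ltn_trans.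
    rewrite pairwise_cat -sorted_pairwise ?S /=; last exact: ltn_trans.
    by rewrite andbT; apply/allrelP => u v /qi ui; rewrite inE => /eqP ->.
  + rewrite -cats1 catA cat_uniq U /= andbT orbF.
    by apply/negP; rewrite M; lia.
  + by move=> v; rewrite -cats1 catA mem_cat M inE; case: eqP; lia.
- by split; rewrite ?cat_rcons //; apply: path_sorted S.
- have P : perm_eq (rcons o x ++ (a ++ b)) (o ++ (a ++ x :: b)).
    by rewrite cat_rcons perm_cat2l -cat1s perm_catCA.
  split; [|by rewrite (perm_uniq P) | by move=> v; rewrite (perm_mem P)].
  apply: subseq_sorted S; first exact: ltn_trans.
  by apply: cat_subseq => //; apply: subseq_cons.
Qed.

Lemma jq_wf_reach n s s' : jq_reach n s s' -> jq_wf s -> jq_wf s'.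
Proof. by elim=> // s1 s2 s3 /jq_wf_step H _ IH /H. Qed.

Lemma jq_wf_init : jq_wf (JQ 0 [::] [::] [::]).
Proof. by split=> // v; rewrite in_nil; lia. Qed.

Definition shape4231 w x t y : bool := [&& 0 < y, y < x, x < t & t < w].

(* [w] before [x] guarantees that [t < w] had been appended when [x] left. *)
Definition locks_pending (o : seq nat) L : Prop :=
  forall w x t y, shape4231 w x t y -> subseq [:: w; x] o ->
    y \notin o -> t \notin o -> lock_pair L y t.

Definition avoids4231_prefix (o : seq nat) : Prop :=
  forall w x t y, shape4231 w x t y -> subseq [:: w; x; t] o ->
    (y \in o) && ~~ subseq [:: w; x; t; y] o.

Definition output_safe (o : seq nat) L : Prop :=
  locks_pending o L /\ avoids4231_prefix o.

Lemma output_safe_rcons o L L' z :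
  output_safe o L -> z \notin o ->
  (forall y v, lock_pair L y v -> lock_pair L' y v) ->
  (forall y, 0 < y < z -> y \notin o -> ~~ lock_pair L y z) ->
  (forall w t y, shape4231 w z t y -> w \in o -> y \notin o -> t \notin o ->
     lock_pair L' y t) ->
  output_safe (rcons o z) L'.
Proof.
move=> [P A] zo mono free jump; split.
  move=> w x t y sh /(@subseq_rcons_cases _ [:: w]) S.
  rewrite !mem_rcons !in_cons !negb_or => /andP [_ yo] /andP [_ to].
  case: S => [S | [xz S]]; first exact/mono/(P w x t y).
  by subst x; apply: (jump w) => //; rewrite -sub1seq.
move=> w x t y sh; have /and4P [y0 yx xt tw] := sh.
case/(@subseq_rcons_cases _ [:: w; x]) => [S | [tz S]]; last subst t.
  have /andP [yo no4] := A w x t y sh S.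
  rewrite mem_rcons in_cons yo orbT /=.
  apply/negP => /(@subseq_rcons_cases _ [:: w; x; t]) [|[yz _]].
    by move/negP: no4.
  by move: zo; rewrite -yz yo.
case yo: (y \in o).
  rewrite mem_rcons in_cons yo orbT /=.
  apply/negP => /(@subseq_rcons_cases _ [:: w; x; z]) [/mem_subseq Sz|[yz _]].
    by move: zo; rewrite Sz // !inE eqxx !orbT.
  by move: yx xt; rewrite yz; lia.
have := free y; rewrite y0 (ltn_trans yx xt) yo => /(_ isT isT)/negP[].
by apply: (P w x z y) => //; rewrite yo.
Qed.

Definition jq_safe (s : jq_state) : Prop := output_safe (jq_out s) (jq_locks s).

Lemma jq_safe_step n s s' : jq_step n s s' -> jq_wf s -> jq_safe s -> jq_safe s'.
Proof.
case=> {s s'} [// | i x q L o | i a x b L o _ unlocked] wf safe.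
- have xo := jq_wf_out wf (mem_head x q).
  have xi : x <= i by apply: (jq_wf_le wf); rewrite mem_cat mem_head orbT.
  have [S _ _] := wf.
  have below y : 0 < y < x -> y \notin o -> False.
    move=> /andP [y0 yx] yo.
    have yq : y \in [::] ++ x :: q by apply: (jq_wf_mem wf) => //; lia.
    by have [] := sorted_ltn_mem_split (a := [::]) S yq; rewrite yx.
  apply: (output_safe_rcons safe) => // [y yx yo | w t y /and4P [y0 yx _ _] _ yo _].
    by case: (below y yx yo).
  by case: (below y); rewrite ?y0.
- have xq : x \in a ++ x :: b by rewrite mem_cat mem_head orbT.
  have xo := jq_wf_out wf xq.
  have xi : x <= i by apply: (jq_wf_le wf); rewrite mem_cat xq orbT.
  have [S _ _] := wf.
  apply: (output_safe_rcons safe) => //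
    [y v H | y /andP [y0 yx] yo | w t y /and4P [y0 yx xt tw] wo yo to].
  + by rewrite /lock_pair /=; apply/orP; right.
  + apply: contra unlocked => lk; apply/is_lockedP; exists y => //.
    by apply: (jq_wf_mem wf) => //; lia.
  + have wi : w <= i by apply: (jq_wf_le wf); rewrite mem_cat wo.
    have yq : y \in a ++ x :: b by apply: (jq_wf_mem wf) => //; lia.
    have tq : t \in a ++ x :: b by apply: (jq_wf_mem wf) => //; lia.
    have [ya _] := sorted_ltn_mem_split S yq; have [_ tb] := sorted_ltn_mem_split S tq.
    by rewrite /lock_pair /= ya tb yx xt.
Qed.

Lemma jq_safe_init : jq_safe (JQ 0 [::] [::] [::]).
Proof. by split=> w x t y _. Qed.

Lemma jq_safe_reach n s s' :
  jq_reach n s s' -> jq_wf s -> jq_safe s -> jq_safe s'.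
Proof.
elim=> // s1 s2 s3 st _ IH wf safe.
by apply: IH; [exact: jq_wf_step st wf | exact: jq_safe_step st wf safe].
Qed.

Lemma producible_avoids4231 n pi : jq_producible n pi -> avoids pi [:: 4; 2; 3; 1].
Proof.
move=> [L R] [s [Ss iso]].
have [_ _ M] := jq_wf_reach R jq_wf_init.
have [_ A] := jq_safe_reach R jq_wf_init jq_safe_init.
case: s Ss iso (order_iso_size iso) => [|w [|x [|t [|y []]]]] // Ss iso _.
have sh : shape4231 w x t y.
  rewrite /shape4231 -order_iso_4231 iso andbT.
  by move: (M y); rewrite cats0 (mem_subseq Ss) ?inE ?eqxx ?orbT // => /esym /andP [].
have /andP [_ /negP []] := A w x t y sh (subseq_trans (prefix_subseq [:: w; x; t] [:: y]) Ss).
exact: Ss.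
Qed.

Definition locks_explained (p : seq nat) L : Prop :=
  forall y v, lock_pair L y v -> y \notin p -> v \notin p ->
    exists w x, subseq [:: w; x] p /\ [&& y < x, x < v & v < w].

Lemma locks_explained_rcons p z L :
  locks_explained p L -> locks_explained (rcons p z) L.
Proof.
move=> K y v lk; rewrite !mem_rcons !in_cons !negb_or => /andP [_ yp] /andP [_ vp].
have [w [x [S H]]] := K y v lk yp vp.
by exists w, x; split=> //; apply: subseq_trans S (subseq_rcons p z).
Qed.

Lemma locks_explained_jump p z a b i L :
  locks_explained p L -> (i == 0) || (i \in p) -> sorted ltn (a ++ z :: b) ->
  {in b, forall v, v <= maxn i z} -> locks_explained (rcons p z) ((a, b) :: L).
Proof.
move=> K i_out S b_le y v; rewrite /lock_pair /= => /orP [/andP [ya vb] | lk].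
  rewrite !mem_rcons !in_cons !negb_or => /andP [_ yp] /andP [_ vp].
  have yq : y \in a ++ z :: b by rewrite mem_cat ya.
  have vq : v \in a ++ z :: b by rewrite mem_cat !in_cons vb !orbT.
  have yz : y < z by have [<- _] := sorted_ltn_mem_split S yq.
  have zv : z < v by have [_ <-] := sorted_ltn_mem_split S vq.
  have vi : v <= i by move: (b_le v vb) zv; clear; lia.
  have ip : i \in p by case/orP: i_out => [/eqP i0 | //]; move: vi zv; rewrite i0; lia.
  exists i, z; split; last by rewrite yz zv ltn_neqAle vi andbT; apply: contraNneq vp => ->.
  rewrite -cats1; apply: (@cat_subseq _ [:: i] [:: z]); last exact: subseq_refl.
  by rewrite sub1seq.
exact: (locks_explained_rcons (z := z) K lk).
Qed.

Section Greedy.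

Variables (n : nat) (pi : seq nat).
Hypothesis pi_perm : perm_eq pi (iota 1 n).
Hypothesis pi_avoids : avoids pi [:: 4; 2; 3; 1].

Let pi_mem v : (v \in pi) = (0 < v <= n).
Proof. by rewrite (perm_mem pi_perm) mem_iota add1n ltnS. Qed.

Let pi_uniq : uniq pi.
Proof. by rewrite (perm_uniq pi_perm) iota_uniq. Qed.

Let next_fresh p z rest : p ++ z :: rest = pi -> z \notin p.
Proof.
move=> Epi; move: pi_uniq; rewrite -Epi cat_uniq => /and3P [_ + _].
by apply: contra => zp; apply/hasP; exists z; rewrite ?mem_head.
Qed.

Lemma pending_unlocked p z rest q L :
  p ++ z :: rest = pi -> locks_explained p L ->
  (forall y, y \in q -> (y \in pi) && (y \notin p)) -> ~~ is_locked q L z.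
Proof.
move=> Epi K q_pending; apply/is_lockedP => -[y /q_pending /andP [ypi yp] lk].
have [w [x [Swx /and3P [yx xz zw]]]] := K y z lk yp (next_fresh Epi).
apply: pi_avoids; exists [:: w; x; z; y]; split; last by rewrite order_iso_4231 yx xz zw.
rewrite -Epi; apply: (@cat_subseq _ [:: w; x] [:: z; y]) => //=.
rewrite eqxx sub1seq; move: ypi; rewrite -Epi mem_cat (negbTE yp) /= in_cons.
by case/orP=> [/eqP yz | //]; move: yx xz; rewrite yz; lia.
Qed.

Definition greedy_inv (s : jq_state) : Prop :=
  let: JQ i _ L p := s in
  [/\ jq_reach n (JQ 0 [::] [::] [::]) s, (i == 0) || (i \in p) & locks_explained p L].

Lemma greedy_step p z rest i q L :
  p ++ z :: rest = pi -> greedy_inv (JQ i q L p) ->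
  exists i' q' L', greedy_inv (JQ i' q' L' (rcons p z)).
Proof.
move=> Epi [R i_out K].
have zp := next_fresh Epi.
have /andP [z0 zn] : 0 < z <= n by rewrite -pi_mem -Epi mem_cat mem_head orbT.
have p_n v : v \in p -> v <= n.
  move=> vp; have : v \in pi by rewrite -Epi mem_cat vp.
  by rewrite pi_mem => /andP [].
have i_n : i <= n by case/orP: i_out => [/eqP -> // | /p_n].
pose m := maxn i z.
have [q1 R1] : exists q1, jq_reach n (JQ 0 [::] [::] [::]) (JQ m q1 L p).
  exists (q ++ iota i.+1 (m - i)); apply: jq_reach_trans R _.
  have := @jq_reach_push n L p (m - i) i q; rewrite subnKC ?leq_maxl //.
  by apply; rewrite geq_max i_n.
have wf1 := jq_wf_reach R1 jq_wf_init.
have m_out : (m == 0) || (m \in rcons p z).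
  rewrite mem_rcons in_cons /m; case: leqP => [_ | zi]; first by rewrite eqxx orbT.
  by case/orP: i_out => [/eqP i0 | ->]; [rewrite i0 in zi | rewrite !orbT].
have zq1 := jq_wf_mem wf1 zp z0 (leq_maxr i z).
case/splitPr: zq1 wf1 R1 => a b wf1 R1.
case: a => [|a0 a] in wf1 R1 *.
  exists m, b, L; split=> //; last exact: locks_explained_rcons.
  exact: jq_reach_trans R1 (jq_step_reach (jq_pop_front _ _ _ _ _ _)).
have [S _ M1] := wf1.
have unlocked : ~~ is_locked (a0 :: a ++ z :: b) L z.
  apply: (pending_unlocked Epi K) => y yq; rewrite (jq_wf_out wf1 yq) andbT pi_mem.
  have := M1 y; rewrite mem_cat yq orbT => /esym /andP [-> ym].
  by rewrite (leq_trans ym) // geq_max i_n.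
exists m, (a0 :: a ++ b), ((a0 :: a, b) :: L); split=> //.
  exact: jq_reach_trans R1 (jq_step_reach (@jq_jump n m (a0 :: a) z b L p isT unlocked)).
apply: locks_explained_jump K i_out S _ => v vb.
by have := M1 v; rewrite !(mem_cat, in_cons) vb !orbT => /esym /andP [].
Qed.

Lemma greedy_prefix p rest : p ++ rest = pi -> exists i q L, greedy_inv (JQ i q L p).
Proof.
elim/last_ind: p rest => [|p z IH] rest Epi.
  by exists 0, [::], [::]; split=> //; apply: jq_refl.
rewrite cat_rcons in Epi; have [i [q [L G]]] := IH _ Epi.
exact: greedy_step Epi G.
Qed.

Lemma avoids4231_producible : jq_producible n pi.
Proof.
have [i [q [L [R i_out _]]]] := greedy_prefix (cats0 pi).
have [_ U M] := jq_wf_reach R jq_wf_init.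
have i_n : i <= n.
  by case/orP: i_out => [/eqP -> // | ]; rewrite pi_mem => /andP [].
have q0 : q = [::].
  case: q => // v q in U M R *; have := M v; rewrite mem_cat mem_head orbT => /esym vi.
  move: U; rewrite cat_uniq => /and3P [_ /hasP []]; exists v; rewrite ?mem_head //.
  by rewrite pi_mem; case/andP: vi => -> /leq_trans ->.
have n_i : n <= i.
  case: (posnP n) => [-> // | n0].
  have : n \in pi ++ q by rewrite mem_cat pi_mem n0 leqnn.
  by rewrite M => /andP [].
have i_eq : i = n by apply/anti_leq; rewrite i_n n_i.
by exists L; move: R; rewrite q0 i_eq.
Qed.

End Greedy.

Theorem mainTheorem2 (n : nat) (pi : seq nat) :
  perm_eq pi (iota 1 n) ->
  (jq_producible n pi <-> avoids pi [:: 4; 2; 3; 1]).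
Proof.
move=> pi_perm; split; first exact: producible_avoids4231.
exact: avoids4231_producible.
Qed.
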